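(* Let $G$ be a torsion-free finitely generated residually finite group and $\phi\in\operatorname{Aut}(G)$. If $R(\phi)<\infty$, then $\operatorname{Stab}_\phi(g)=1$ for all $g\in G$.
   Context: For an endomorphism $\phi$ of $G$, $R(\phi)\in\mathbb{N}\cup\{\infty\}$ is the number of classes of the relation $x\sim hx\phi(h)^{-1}$ ($h\in G$). The $\phi$-stabiliser of $g\in G$ is $\operatorname{Stab}_\phi(g)=\{b\in G\mid g=bg\phi(b)^{-1}\}$. *)

From Stdlib Require Import List.
Import ListNotations.

Record Group := {
  carrier :> Type;
  gmul : carrier -> carrier -> carrier;
  gone : carrier;
  ginv : carrier -> carrier;
  gmul_assoc : forall x y z, gmul x (gmul y z) = gmul (gmul x y) z;
  gmul_1l : forall x, gmul gone x = x;
  gmul_1r : forall x, gmul x gone = x;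
  gmul_Vl : forall x, gmul (ginv x) x = gone;
  gmul_Vr : forall x, gmul x (ginv x) = gone
}.

Arguments gmul {g} _ _.
Arguments gone {g}.
Arguments ginv {g} _.

Fixpoint gpow {G : Group} (x : G) (n : nat) : G :=
  match n with O => gone | S k => gmul x (gpow x k) end.

Definition torsion_free (G : Group) : Prop :=
  forall (x : G) (n : nat), 0 < n -> gpow x n = gone -> x = gone.

Fixpoint word_eval {G : Group} (w : list (G * bool)) : G :=
  match w with
  | [] => gone
  | (s, b) :: w' => gmul (if b then ginv s else s) (word_eval w')
  end.

Definition finitely_generated (G : Group) : Prop :=
  exists S : list G, forall g : G,
    exists w : list (G * bool), (forall p, In p w -> In (fst p) S) /\ word_eval w = g.

Definition is_normal_subgroup {G : Group} (N : G -> Prop) : Prop :=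
  N gone /\
  (forall x y, N x -> N y -> N (gmul x y)) /\
  (forall x, N x -> N (ginv x)) /\
  (forall g x, N x -> N (gmul (gmul g x) (ginv g))).

Definition finite_index {G : Group} (N : G -> Prop) : Prop :=
  exists reps : list G, forall x : G,
    exists r, In r reps /\ N (gmul (ginv r) x).

Definition residually_finite (G : Group) : Prop :=
  forall g : G, g <> gone ->
    exists N : G -> Prop, is_normal_subgroup N /\ finite_index N /\ ~ N g.

Definition is_hom {G : Group} (phi : G -> G) : Prop :=
  forall x y, phi (gmul x y) = gmul (phi x) (phi y).

Definition is_automorphism {G : Group} (phi : G -> G) : Prop :=
  is_hom phi /\ (forall x y, phi x = phi y -> x = y) /\ (forall y, exists x, phi x = y).

Definition twisted_conj {G : Group} (phi : G -> G) (x y : G) : Prop :=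
  exists h : G, y = gmul (gmul h x) (ginv (phi h)).

Definition reidemeister_finite {G : Group} (phi : G -> G) : Prop :=
  exists reps : list G, forall x : G, exists r, In r reps /\ twisted_conj phi r x.

Definition stab_phi {G : Group} (phi : G -> G) (g : G) (b : G) : Prop :=
  g = gmul (gmul b g) (ginv (phi b)).

(* An element b lies in Stab_phi(g) exactly when
   it is fixed by the automorphism x |-> g phi(x) g^-1, whose twisted classes are the
   twisted classes of phi translated by g; so it suffices to show that an automorphism
   phi with R(phi) < oo has no fixed point b <> 1.

   Suppose phi b = b <> 1.  Since no power of b is trivial, residual finiteness yields
   normal subgroups of finite index avoiding any given power of b, and these may be
   taken phi-invariant: in a finitely generated group there are finitely many normal
   subgroups of a given index, so the preimages of one under the powers of phi repeat.
   Iterating, we get a phi-invariant M of finite index such that the order of b modulo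
   M has more than R(phi) distinct divisors e.  In the finite group G/M the elements
   b^e are fixed by the endomorphism induced by phi and pairwise non-conjugate, as they
   have distinct orders.  A Burnside count shows that a finite group with an
   endomorphism has at least as many twisted classes as pairwise non-conjugate fixed
   elements, while G/M has at most R(phi) twisted classes: a contradiction. *)

From HB Require Import structures.
From mathcomp Require Import all_boot all_fingroup cyclic.
From Stdlib Require Import ClassicalEpsilon Classical.
From Stdlib Require List.
Set Implicit Arguments. Unset Strict Implicit. Unset Printing Implicit Defensive.

Lemma pigeonhole_seq (T : finType) (f : nat -> T) : exists i j, i < j /\ f i = f j.
Proof.
apply: NNPP => no_repeat.
have inj : injective (fun i : 'I_#|T|.+1 => f i).
  move=> i j fij; apply: val_inj => /=.
  by case: (ltngtP i j) => // ij; case: no_repeat; [exists i, j | exists j, i].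
by have := leq_card _ inj; rewrite card_ord ltnn.
Qed.

Lemma length_size (T : Type) (s : seq T) : List.length s = size s.
Proof. by elim: s => //= x s ->. Qed.

Lemma In_map_mem (T : Type) (U : eqType) (f : T -> U) (x : T) (s : seq T) :
  List.In x s -> f x \in map f s.
Proof. by elim: s => //= y s IH [-> | /IH fxs]; rewrite inE ?eqxx ?fxs ?orbT. Qed.

Definition asbool (P : Prop) : bool := if excluded_middle_informative P then true else false.

Lemma asboolP (P : Prop) : reflect P (asbool P).
Proof. by rewrite /asbool; case: excluded_middle_informative => h; constructor. Qed.

Lemma divn_inj_dvd m d1 d2 : 0 < m -> d1 %| m -> d2 %| m -> m %/ d1 = m %/ d2 -> d1 = d2.
Proof. by move=> m0 d1m d2m e; rewrite -(mulKn d1 m0) -(mulKn d2 m0) -!divnA // e. Qed.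

Section TwistedClasses.
Local Open Scope group_scope.
Variables (gT : finGroupType) (psi : gT -> gT).
Hypothesis psiM : forall x y, psi (x * y) = psi x * psi y.

Lemma endo1 : psi 1 = 1.
Proof. by apply: (mulgI (psi 1)); rewrite -psiM !mulg1. Qed.

Lemma endoV x : psi x^-1 = (psi x)^-1.
Proof. by apply: (mulgI (psi x)); rewrite -psiM !mulgV endo1. Qed.

Definition twist (x h : gT) : gT := h^-1 * x * psi h.

Lemma twist1 : twist^~ 1 =1 id.
Proof. by move=> x; rewrite /twist endo1 invg1 mul1g mulg1. Qed.

Lemma twistM x : act_morph twist x.
Proof. by move=> h k; rewrite /twist psiM invMg !mulgA. Qed.

Definition twist_action := TotalAction twist1 twistM.

Definition twisted_classes := orbit twist_action [set: gT] @: [set: gT].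

(* If a = y ^ g with y fixed by psi, then 'C[a] :* (g^-1 psi(g)) consists of
   elements fixed by a; this is the local inequality behind the Burnside count. *)
Lemma card_cent1_le_fix (a y g : gT) : psi y = y -> a = y ^ g ->
  #|'C[a]| <= #|'Fix_([set: gT] | twist_action)[a]|.
Proof.
move=> fixy def_a; set x0 := g^-1 * psi g.
have psi_a : psi a = x0^-1 * a * x0.
  by rewrite def_a /conjg !psiM endoV fixy /x0 invMg invgK !mulgA !mulgK.
clearbody x0; rewrite -(card_rcoset 'C[a] x0); apply: subset_leq_card.
apply/subsetP => _ /rcosetP [c /cent1P ca ->]; rewrite inE in_setT; apply/afix1P.
by rewrite /= /twist psi_a !mulgA mulgK -(mulgA _ c) ca mulgA mulVg mul1g.
Qed.

Lemma sum_cent1_class (y : gT) : \sum_(a in y ^: [set: gT]) #|'C[a]| = #|gT|.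
Proof.
rewrite (eq_bigr (fun _ => #|'C[y]|)); last first.
  by move=> a /imsetP [g _ ->]; rewrite cent1J cardJg.
by rewrite sum_nat_const -index_cent1 setTI mulnC Lagrange ?subsetT // cardsT.
Qed.

Lemma card_fixed_le_twisted_classes (Y : {set gT}) :
  {in Y, forall y, psi y = y} ->
  {in Y &, forall y z, y \in z ^: [set: gT] -> y = z} ->
  #|Y| <= #|twisted_classes|.
Proof.
move=> fixY ncjY.
have acts : [acts [set: gT], on [set: gT] | twist_action].
  by apply/actsP => h _ x; rewrite !inE.
rewrite -(leq_pmul2r (cardG_gt0 [set: gT])) /twisted_classes -(Frobenius_Cauchy acts).
have -> : (#|Y| * #|[set: gT]| = \sum_(y in Y) \sum_(a in y ^: [set: gT]) #|'C[a]|)%N.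
  by rewrite cardsT -sum_nat_const; apply: eq_bigr => y _; rewrite sum_cent1_class.
rewrite (exchange_big_dep predT) //= [X in _ <= X](eq_bigl predT) => [|a]; last by rewrite in_setT.
apply: leq_sum => a _.
case: (pickP [pred y in Y | a \in y ^: [set: gT]]) => [y0 /andP [y0Y ay0]|none]; last first.
  by rewrite big_pred0 // => y; have := none y; rewrite /= => ->.
rewrite (big_pred1 y0) => [|y]; last first.
  apply/andP/eqP => [[yY ay]|-> //]; apply: ncjY => //.
  by rewrite -(class_eqP ay0) class_sym.
by move: ay0 => /imsetP [g _ ->]; apply: (card_cent1_le_fix (y := y0) (g := g)); [apply: fixY|].
Qed.

Lemma card_twisted_classes_le (reps : seq gT) :
  (forall x, exists2 r, r \in reps & x \in orbit twist_action [set: gT] r) ->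
  #|twisted_classes| <= size reps.
Proof.
move=> cover; apply: (@leq_trans #|[set orbit twist_action [set: gT] r | r in reps]|).
  apply: subset_leq_card; apply/subsetP => _ /imsetP [x _ ->].
  have [r rin xr] := cover x; apply/imsetP; exists r => //.
  by apply/eqP; rewrite orbit_eq_mem.
exact: leq_trans (leq_imset_card _ _) (card_size _).
Qed.
End TwistedClasses.

Section AbstractGroup.
Variable G : Group.
Local Notation "x ** y" := (@gmul G x y) (at level 40, left associativity).
Local Notation "x ^-1" := (@ginv G x).
Local Notation one := (@gone G).

Lemma gmulA x y z : x ** (y ** z) = x ** y ** z. Proof. exact: gmul_assoc. Qed.
Lemma gmulKl x y : x^-1 ** (x ** y) = y. Proof. by rewrite gmulA gmul_Vl gmul_1l. Qed.
Lemma gmulKVl x y : x ** (x^-1 ** y) = y. Proof. by rewrite gmulA gmul_Vr gmul_1l. Qed.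
Lemma gmulKr x y : x ** y ** y^-1 = x. Proof. by rewrite -gmulA gmul_Vr gmul_1r. Qed.
Lemma gmulKVr x y : x ** y^-1 ** y = x. Proof. by rewrite -gmulA gmul_Vl gmul_1r. Qed.

Lemma gmulIl x y z : x ** y = x ** z -> y = z.
Proof. by move=> e; rewrite -(gmulKl x y) e gmulKl. Qed.

Lemma gmulIr x y z : y ** x = z ** x -> y = z.
Proof. by move=> e; rewrite -(gmulKr y x) e gmulKr. Qed.

Lemma ginvK x : (x^-1)^-1 = x.
Proof. by apply: (@gmulIl x^-1); rewrite gmul_Vr gmul_Vl. Qed.

Lemma ginvM x y : (x ** y)^-1 = y^-1 ** x^-1.
Proof. by apply: (@gmulIl (x ** y)); rewrite gmul_Vr -gmulA gmulKVl gmul_Vr. Qed.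

Lemma ginv1 : one^-1 = one.
Proof. by apply: (@gmulIl one); rewrite gmul_Vr gmul_1l. Qed.

Lemma gpowD x m n : gpow x (m + n) = gpow x m ** gpow x n.
Proof. by elim: m => [|m IH] /=; rewrite ?gmul_1l // IH gmulA. Qed.

Lemma hom1 (f : G -> G) : is_hom f -> f one = one.
Proof. by move=> fM; apply: (@gmulIl (f one)); rewrite -fM !gmul_1r. Qed.

Lemma homV (f : G -> G) : is_hom f -> forall x, f x^-1 = (f x)^-1.
Proof. by move=> fM x; apply: (@gmulIl (f x)); rewrite -fM !gmul_Vr hom1. Qed.

Lemma hom_gpow (f : G -> G) : is_hom f -> forall x n, f (gpow x n) = gpow (f x) n.
Proof. by move=> fM x; elim=> [|n IH] /=; [exact: hom1 | rewrite fM IH]. Qed.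

Lemma iter_hom (f : G -> G) : is_hom f -> forall t, is_hom (iter t f).
Proof. by move=> fM; elim=> [|t IH] x y //=; rewrite IH fM. Qed.

Lemma iter_surj (f : G -> G) :
  (forall y, exists x, f x = y) -> forall t y, exists x, iter t f x = y.
Proof.
move=> fS; elim=> [|t IH] y /=; first by exists y.
by have [z <-] := fS y; have [x <-] := IH z; exists x.
Qed.

Section NormalSubgroup.
Variable A : G -> Prop.
Hypothesis A_normal : is_normal_subgroup A.

Lemma memN1 : A one. Proof. by case: A_normal. Qed.
Lemma memNM x y : A x -> A y -> A (x ** y).
Proof. by case: A_normal => _ [AM _]; apply: AM. Qed.
Lemma memNV x : A x -> A x^-1.
Proof. by case: A_normal => _ [_ [AV _]]; apply: AV. Qed.
Lemma memNJ g x : A x -> A (g ** x ** g^-1).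
Proof. by case: A_normal => _ [_ [_ AJ]]; apply: AJ. Qed.

Definition same_coset x y := A (x^-1 ** y).

Lemma same_coset_refl x : same_coset x x.
Proof. by rewrite /same_coset gmul_Vl; exact: memN1. Qed.

Lemma same_coset_sym x y : same_coset x y -> same_coset y x.
Proof. by move/memNV; rewrite /same_coset ginvM ginvK. Qed.

Lemma same_coset_trans x y z : same_coset x y -> same_coset y z -> same_coset x z.
Proof. by move=> xy yz; have := memNM xy yz; rewrite -gmulA gmulKVl. Qed.

Lemma same_coset_mull l x y : same_coset x y -> same_coset (l ** x) (l ** y).
Proof. by rewrite /same_coset ginvM -gmulA gmulKl. Qed.

Lemma same_coset_mulr l x y : same_coset x y -> same_coset (x ** l) (y ** l).
Proof. by move/(memNJ l^-1); rewrite ginvK /same_coset ginvM -!gmulA. Qed.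

Lemma same_coset_mul x x' y y' :
  same_coset x x' -> same_coset y y' -> same_coset (x ** y) (x' ** y').
Proof.
by move=> xx' yy'; apply: same_coset_trans (same_coset_mulr _ xx') (same_coset_mull _ yy').
Qed.

Lemma same_coset_inv x y : same_coset x y -> same_coset x^-1 y^-1.
Proof. by move/memNV/(memNJ x); rewrite /same_coset ginvM ginvK gmulA gmulKr. Qed.

Lemma same_coset1 x : same_coset one x <-> A x.
Proof. by rewrite /same_coset ginv1 gmul_1l. Qed.

Lemma same_coset_mem x y : same_coset x y -> (A x <-> A y).
Proof.
move=> xy; split=> [Ax | Ay]; first by have := memNM Ax xy; rewrite gmulKVl.
by have := memNM Ay (memNV xy); rewrite ginvM ginvK gmulKVl.
Qed.
End NormalSubgroup.

Lemma normal_inter (A B : G -> Prop) : is_normal_subgroup A -> is_normal_subgroup B ->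
  is_normal_subgroup (fun x => A x /\ B x).
Proof.
move=> An Bn; split; first by split; apply: memN1.
split; first by move=> x y [? ?] [? ?]; split; apply: memNM.
split; first by move=> x [? ?]; split; apply: memNV.
by move=> g x [? ?]; split; apply: memNJ.
Qed.

Lemma normal_preimage (f : G -> G) (A : G -> Prop) : is_hom f -> is_normal_subgroup A ->
  is_normal_subgroup (fun x => A (f x)).
Proof.
move=> fM An; split; first by rewrite hom1 //; apply: memN1.
split; first by move=> x y Ax Ay; rewrite fM; apply: memNM.
split; first by move=> x Ax; rewrite homV //; apply: memNV.
by move=> g x Ax; rewrite !fM homV //; apply: memNJ.
Qed.

Lemma finite_index_ext (A B : G -> Prop) :
  (forall x, A x <-> B x) -> finite_index A -> finite_index B.
Proof.
move=> AB [L cover]; exists L => x.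
by have [r [? ?]] := cover x; exists r; split=> //; apply/AB.
Qed.

Lemma finite_index_full : finite_index (fun _ : G => True).
Proof. by exists [:: one] => x; exists one; split => //; left. Qed.

(* Representatives of the intersection are chosen in the pairwise intersections of
   cosets of A and of B. *)
Lemma finite_index_inter (A B : G -> Prop) :
  is_normal_subgroup A -> is_normal_subgroup B ->
  finite_index A -> finite_index B -> finite_index (fun x => A x /\ B x).
Proof.
move=> An Bn [LA coverA] [LB coverB].
pose common ra rb c := same_coset A ra c /\ same_coset B rb c.
pose meet ra rb := epsilon (inhabits one) (common ra rb).
exists (List.flat_map (fun ra => List.map (meet ra) LB) LA) => x.
have [ra [raL ax]] := coverA x; have [rb [rbL bx]] := coverB x.
have [ma mb] : common ra rb (meet ra rb).
  by apply: (epsilon_spec (inhabits one) (common ra rb)); exists x.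
exists (meet ra rb); split.
  by apply/List.in_flat_map; exists ra; split=> //; apply/List.in_map_iff; exists rb.
by split; [exact: (same_coset_trans An (same_coset_sym An ma) ax)
          | exact: (same_coset_trans Bn (same_coset_sym Bn mb) bx)].
Qed.

Section CosetIndex.
Variable A : G -> Prop.
Hypothesis A_normal : is_normal_subgroup A.
Variable L : list G.
Hypothesis L_cover : forall x, exists r, List.In r L /\ same_coset A r x.
Local Notation rep i := (List.nth i L one).

Definition represents x : pred nat :=
  fun i => (i < List.length L) && asbool (same_coset A (rep i) x).

Lemma represents_exists x : exists i, represents x i.
Proof.
have [r [rL rx]] := L_cover x; have [i [iL def_r]] := List.In_nth _ _ one rL.
by exists i; apply/andP; split; [apply/ltP | apply/asboolP; rewrite def_r].
Qed.

Definition coset_index x := ex_minn (represents_exists x).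

Lemma coset_index_lt x : coset_index x < List.length L.
Proof. by rewrite /coset_index; case: ex_minnP => i /andP []. Qed.

Lemma coset_index_rep x : same_coset A (rep (coset_index x)) x.
Proof. by rewrite /coset_index; case: ex_minnP => i /andP [_ /asboolP]. Qed.

Lemma coset_index_le x y : same_coset A x y -> coset_index y <= coset_index x.
Proof.
move=> xy; rewrite {1}/coset_index; case: ex_minnP => i _ min_i; apply: min_i.
rewrite /represents coset_index_lt; apply/asboolP.
exact: (same_coset_trans A_normal (coset_index_rep x) xy).
Qed.

Lemma coset_indexP x y : coset_index x = coset_index y <-> same_coset A x y.
Proof.
split=> [e | xy]; last first.
  by apply/eqP; rewrite eqn_leq !coset_index_le //; exact: same_coset_sym.
have := coset_index_rep y; rewrite -e.
exact: (same_coset_trans A_normal (same_coset_sym A_normal (coset_index_rep x))).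
Qed.
End CosetIndex.

Lemma gpow_mem_finite_index (A : G -> Prop) (b : G) :
  is_normal_subgroup A -> finite_index A -> exists2 n, 0 < n & A (gpow b n).
Proof.
move=> An [L cover].
have [i [j [ij e]]] := pigeonhole_seq (fun n => Ordinal (coset_index_lt cover (gpow b n))).
have coset_ij : same_coset A (gpow b i) (gpow b j) by apply/(coset_indexP An cover); case: e.
exists (j - i); first by rewrite subn_gt0.
by move: coset_ij; rewrite /same_coset -{1}(subnKC (ltnW ij)) gpowD gmulKl.
Qed.

Lemma order_mod (A : G -> Prop) (b : G) : is_normal_subgroup A -> finite_index A ->
  exists2 m, 0 < m & forall n, A (gpow b n) <-> m %| n.
Proof.
move=> An Afi; have [n0 n0_gt0 An0] := gpow_mem_finite_index b An Afi.
have ex_n : exists n, (0 < n) && asbool (A (gpow b n)).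
  by exists n0; rewrite n0_gt0; apply/asboolP.
case: (ex_minnP ex_n) => m /andP [m_gt0 /asboolP Am] min_m.
have Amul q : A (gpow b (q * m)).
  by elim: q => [|q IH]; [apply: memN1 | rewrite mulSn gpowD; apply: memNM].
exists m => // n; split=> [An' | /dvdnP [q ->] //].
have Amod : A (gpow b (n %% m)).
  move: An'; rewrite {1}(divn_eq n m) gpowD => /(memNM An (memNV An (Amul (n %/ m)))).
  by rewrite gmulKl.
rewrite /dvdn; case: (n %% m) (ltn_pmod n m_gt0) Amod => // r r_lt Ar.
have m_le : m <= r.+1 by apply: min_m; apply/asboolP.
by rewrite ltnNge m_le in r_lt.
Qed.

Lemma normal_bounded_inter (N : nat -> G -> Prop) (k : nat) :
  (forall t, is_normal_subgroup (N t)) ->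
  is_normal_subgroup (fun x => forall t, t < k -> N t x).
Proof.
move=> Nn; split; first by move=> t _; apply: memN1.
split; first by move=> x y Nx Ny t tk; apply: (memNM (Nn t)); [exact: Nx | exact: Ny].
split; first by move=> x Nx t tk; apply: (memNV (Nn t)); exact: Nx.
by move=> g x Nx t tk; apply: (memNJ (Nn t)); exact: Nx.
Qed.

(* A normal subgroup A with at most K coset representatives L, in a group generated
   by S is recorded by a finite code: how multiplication by each generator or its
   inverse acts on coset indices, which cosets lie in A, and the index of the trivial
   coset.  The code determines A, so there are finitely many such subgroups. *)
Section SubgroupCode.
Variables (S : list G) (K : nat).

Definition letter (t : nat) (inv : bool) : G :=
  if inv then (List.nth t S one)^-1 else List.nth t S one.

Definition code_type : finType :=
  ({ffun 'I_K.+1 * 'I_(List.length S) * bool -> 'I_K.+1} * {ffun 'I_K.+1 -> bool} * 'I_K.+1)%type.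

Definition code (A : G -> Prop) (L : list G)
    (cover : forall x, exists r, List.In r L /\ same_coset A r x) : code_type :=
  ([ffun p : 'I_K.+1 * 'I_(List.length S) * bool =>
      inord (coset_index cover (letter p.1.2 p.2 ** List.nth p.1.1 L one))],
   [ffun a : 'I_K.+1 => asbool (A (List.nth a L one))],
   inord (coset_index cover one)).

Lemma coset_index_inord (A : G -> Prop) (L : list G)
    (cover : forall x, exists r, List.In r L /\ same_coset A r x) x :
  List.length L <= K ->
  same_coset A (List.nth (inord (coset_index cover x) : 'I_K.+1) L one) x.
Proof.
move=> LK; rewrite inordK; first exact: coset_index_rep.
exact: leq_trans (ltnW (coset_index_lt cover x)) LK.
Qed.

Section TwoSubgroups.
Variables (A B : G -> Prop) (LA LB : list G).
Hypotheses (A_normal : is_normal_subgroup A) (B_normal : is_normal_subgroup B).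
Hypotheses (coverA : forall x, exists r, List.In r LA /\ same_coset A r x)
           (coverB : forall x, exists r, List.In r LB /\ same_coset B r x).
Hypotheses (LA_K : List.length LA <= K) (LB_K : List.length LB <= K).
Hypothesis same_code : code coverA = code coverB.

Lemma code_walk (w : list (G * bool)) : (forall p, List.In p w -> List.In (fst p) S) ->
  exists a : 'I_K.+1, same_coset A (List.nth a LA one) (word_eval w) /\
                      same_coset B (List.nth a LB one) (word_eval w).
Proof.
elim: w => [|[s inv] w IH] wS /=.
  exists (inord (coset_index coverA one)); split; first exact: coset_index_inord.
  have -> : inord (coset_index coverA one) = inord (coset_index coverB one) :> 'I_K.+1.
    by case: same_code.
  exact: coset_index_inord.
have [a [Aa Ba]] := IH (fun p wp => wS p (or_intror wp)).
have [t [tS def_s]] := List.In_nth _ _ one (wS (s, inv) (or_introl erefl)).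
have tS' : t < List.length S by apply/ltP.
have step := congr1 (fun c : code_type => c.1.1 (a, Ordinal tS', inv)) same_code.
rewrite /= !ffunE /= /letter def_s in step.
exists (inord (coset_index coverA ((if inv then s^-1 else s) ** List.nth a LA one))).
split; first exact: (same_coset_trans A_normal (coset_index_inord _ _ LA_K) (same_coset_mull _ Aa)).
rewrite step.
exact: (same_coset_trans B_normal (coset_index_inord _ _ LB_K) (same_coset_mull _ Ba)).
Qed.

Lemma code_inj : (forall g : G, exists w : list (G * bool),
    (forall p, List.In p w -> List.In (fst p) S) /\ word_eval w = g) ->
  forall x, A x <-> B x.
Proof.
move=> gen x; have [w [wS <-]] := gen x; have [a [Aa Ba]] := code_walk wS.
have mem := congr1 (fun c : code_type => c.1.2 a) same_code; rewrite /= !ffunE in mem.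
rewrite -(same_coset_mem A_normal Aa) -(same_coset_mem B_normal Ba).
by split=> h; apply/asboolP; [rewrite -mem | rewrite mem]; apply/asboolP.
Qed.
End TwoSubgroups.
End SubgroupCode.

Definition preimage_reps (f : G -> G) (L : list G) : list G :=
  List.map (fun y => epsilon (inhabits one) (fun x => f x = y)) L.

Lemma preimage_reps_cover (f : G -> G) (N : G -> Prop) (L : list G) :
  is_hom f -> (forall y, exists x, f x = y) ->
  (forall x, exists r, List.In r L /\ same_coset N r x) ->
  forall x, exists r, List.In r (preimage_reps f L) /\ same_coset (fun z => N (f z)) r x.
Proof.
move=> fM fS cover x; have [r [rL rfx]] := cover (f x).
have fr' : f (epsilon (inhabits one) (fun z => f z = r)) = r.
  by apply: (epsilon_spec (inhabits one) (fun z => f z = r)).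
exists (epsilon (inhabits one) (fun z => f z = r)); split.
  by apply: (List.in_map (fun y => epsilon (inhabits one) (fun z => f z = y))).
by rewrite /same_coset fM homV // fr'.
Qed.

Definition invariant_subgroup (phi : G -> G) (M : G -> Prop) :=
  is_normal_subgroup M /\ finite_index M /\ (forall x, M x -> M (phi x)).

Section Invariance.
Variable phi : G -> G.
Hypothesis phi_aut : is_automorphism phi.
Hypothesis G_fg : finitely_generated G.
Variable N : G -> Prop.
Hypothesis N_normal : is_normal_subgroup N.
Hypothesis N_fi : finite_index N.

Let phiM : is_hom phi := proj1 phi_aut.
Let phiS : forall y, exists x, phi x = y := proj2 (proj2 phi_aut).

Lemma normal_iter_preimage t : is_normal_subgroup (fun x => N (iter t phi x)).
Proof. exact: normal_preimage (iter_hom phiM t) N_normal. Qed.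

(* The preimages of N under the powers of phi repeat periodically: they all have the
   same index, and there are finitely many normal subgroups of a given index. *)
Lemma preimage_period : exists2 d, 0 < d & forall y, N y <-> N (iter d phi y).
Proof.
have [S gen] := G_fg; have [L cover] := N_fi.
pose cover_t t := preimage_reps_cover (iter_hom phiM t) (iter_surj phiS t) cover.
have [i [j [ij same_code]]] :=
  pigeonhole_seq (fun t => code S (List.length L) (cover_t t)).
have Nij := code_inj (normal_iter_preimage i) (normal_iter_preimage j)
  (eq_leq (List.length_map _ _)) (eq_leq (List.length_map _ _)) same_code gen.
exists (j - i); first by rewrite subn_gt0.
move=> y; have [x <-] := iter_surj phiS i y.
by rewrite -iterD (subnK (ltnW ij)); exact: (Nij x).
Qed.

Lemma finite_index_iter_inter k : finite_index (fun x => forall t, t < k -> N (iter t phi x)).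
Proof.
elim: k => [|k IH]; first by apply: finite_index_ext finite_index_full => x; split=> // _ t.
pose A x := (forall t, t < k -> N (iter t phi x)) /\ N (iter k phi x).
apply: (finite_index_ext (A := A)).
  move=> x; split=> [[Nx Nkx] t | Nx]; last by split=> [t tk|]; apply: Nx => //; apply: ltnW.
  by rewrite ltnS leq_eqVlt => /orP [/eqP -> // | tk]; apply: Nx.
apply: finite_index_inter => //; [exact: normal_bounded_inter normal_iter_preimage |
  exact: normal_iter_preimage |].
have [L cover] := N_fi; exists (preimage_reps (iter k phi) L).
exact: preimage_reps_cover (iter_hom phiM k) (iter_surj phiS k) cover.
Qed.

Lemma invariant_subgroup_below : exists2 M, invariant_subgroup phi M & forall x, M x -> N x.
Proof.
have [d d_gt0 period] := preimage_period.
exists (fun x => forall t, t < d -> N (iter t phi x)); last by move=> x /(_ 0 d_gt0).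
split; first exact: normal_bounded_inter normal_iter_preimage.
split; first exact: finite_index_iter_inter.
move=> x Nx t td; rewrite -iterSr; case: (ltngtP t.+1 d) => [|dt|->]; first exact: Nx.
  by rewrite ltnNge td in dt.
exact: (proj1 (period x) (Nx 0 d_gt0)).
Qed.
End Invariance.

(* The quotient of G by a normal subgroup M of finite index, as a finite group: its
   elements are the canonical coset indices. *)
Section FiniteQuotient.
Variable M : G -> Prop.
Hypothesis M_normal : is_normal_subgroup M.
Variable L : list G.
Hypothesis L_cover : forall x, exists r, List.In r L /\ same_coset M r x.
Local Notation rep_at i := (List.nth i L one).

Definition quotient := {i : 'I_(List.length L) | coset_index L_cover (rep_at i) == i}.
HB.instance Definition _ :=
  Finite.copy quotient {i : 'I_(List.length L) | coset_index L_cover (rep_at i) == i}.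

Lemma coset_index_canonical x :
  coset_index L_cover (rep_at (coset_index L_cover x)) == coset_index L_cover x.
Proof. by apply/eqP/(coset_indexP M_normal); exact: coset_index_rep. Qed.

Definition qproj (x : G) : quotient :=
  exist _ (Ordinal (coset_index_lt L_cover x)) (coset_index_canonical x).

Definition qrep (a : quotient) : G := rep_at (val (val a)).

Lemma qrepK a : qproj (qrep a) = a.
Proof. by apply: val_inj; apply: val_inj; exact: (eqP (valP a)). Qed.

Lemma qproj_eqP x y : qproj x = qproj y <-> same_coset M x y.
Proof.
rewrite -(coset_indexP M_normal L_cover); split=> [[] // | e].
by apply: val_inj; apply: val_inj.
Qed.

Lemma qprojK x : same_coset M (qrep (qproj x)) x.
Proof. exact: coset_index_rep. Qed.

Definition qmul (a b : quotient) := qproj (qrep a ** qrep b).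
Definition qone := qproj one.
Definition qinv (a : quotient) := qproj (qrep a)^-1.

Lemma qprojM x y : qmul (qproj x) (qproj y) = qproj (x ** y).
Proof. by apply/qproj_eqP; apply: same_coset_mul => //; apply: qprojK. Qed.

Lemma qprojV x : qinv (qproj x) = qproj x^-1.
Proof. by apply/qproj_eqP; apply: same_coset_inv => //; apply: qprojK. Qed.

Lemma qmulA : associative qmul.
Proof. by move=> a b c; rewrite -[a]qrepK -[b]qrepK -[c]qrepK !qprojM gmulA. Qed.

Lemma qmul1 : left_id qone qmul.
Proof. by move=> a; rewrite -[a]qrepK qprojM gmul_1l. Qed.

Lemma qmulV : left_inverse qone qinv qmul.
Proof. by move=> a; rewrite -[a]qrepK qprojV qprojM gmul_Vl. Qed.

HB.instance Definition _ := Finite_isGroup.Build quotient qmulA qmul1 qmulV.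

Lemma qprojMg x y : (qproj x * qproj y)%g = qproj (x ** y).
Proof. exact: qprojM. Qed.

Lemma qproj_gpow x n : qproj (gpow x n) = (qproj x ^+ n)%g.
Proof. by elim: n => [|n IH] //=; rewrite expgS -IH qprojMg. Qed.

Lemma qproj_eq1 x : qproj x = 1%g <-> M x.
Proof.
rewrite -(same_coset1 M x) -(qproj_eqP one x).
by have -> : (1 : quotient)%g = qproj one by []; split=> ->.
Qed.

Variable phi : G -> G.
Hypothesis phiM : is_hom phi.
Hypothesis M_invariant : forall x, M x -> M (phi x).

Definition qphi (a : quotient) : quotient := qproj (phi (qrep a)).

Lemma qphi_proj x : qphi (qproj x) = qproj (phi x).
Proof.
apply/qproj_eqP; have := M_invariant (qprojK x).
by rewrite /same_coset phiM homV.
Qed.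

Lemma qphiM a b : qphi (a * b)%g = (qphi a * qphi b)%g.
Proof. by rewrite -[a]qrepK -[b]qrepK qprojMg !qphi_proj phiM qprojMg. Qed.

Lemma qproj_twisted_cover (reps : list G) :
  (forall x, exists r, List.In r reps /\ twisted_conj phi r x) ->
  forall a, exists2 r, r \in map qproj reps & a \in orbit (twist_action qphiM) [set: quotient] r.
Proof.
move=> cover_tw a; have [r [rreps [h def_a]]] := cover_tw (qrep a).
exists (qproj r); first exact: In_map_mem.
have -> : a = twist qphi (qproj r) (qproj (ginv h)).
  rewrite /twist qphi_proj homV // -[a]qrepK def_a.
  rewrite -[((qproj (ginv h))^-1)%g]/(qinv (qproj (ginv h))) qprojV ginvK !qprojMg.
  apply/qproj_eqP; apply: same_coset_mul => //; last exact: same_coset_refl.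
  by apply: same_coset_mul => //; apply: same_coset_sym => //; apply: qprojK.
by apply: (mem_orbit (twist_action qphiM)); exact: in_setT.
Qed.

(* If phi fixes b and the order of b modulo M is divisible by the distinct numbers in
   es, the powers b^e (e in es) are fixed by qphi and pairwise non-conjugate in G/M,
   as their orders differ; so G/M, hence also G, has at least size es twisted classes. *)
Lemma divisor_chain_le_reidemeister (b : G) (reps : list G) (es : seq nat) :
  phi b = b ->
  (forall x, exists r, List.In r reps /\ twisted_conj phi r x) ->
  uniq es -> (forall e, e \in es -> forall n, M (gpow b n) -> e %| n) ->
  size es <= List.length reps.
Proof.
move=> fixb cover_tw uniq_es div_es; set be := qproj b.
have dvd_order e : e \in es -> e %| #[be]%g.
  by move=> ees; apply: (div_es e ees); apply/qproj_eq1; rewrite qproj_gpow expg_order.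
have order_inj : {in es &, forall e1 e2, #[(be ^+ e1)%g]%g = #[(be ^+ e2)%g]%g -> e1 = e2}.
  move=> e1 e2 e1es e2es; rewrite !orderXdiv ?dvd_order //.
  exact: divn_inj_dvd (order_gt0 be) (dvd_order _ e1es) (dvd_order _ e2es).
set ys := [seq (be ^+ e)%g | e <- es].
have card_ys : #|[set y in ys]| = size es.
  rewrite cardsE (card_uniqP _) ?size_map // map_inj_in_uniq // => e1 e2 e1es e2es e.
  by apply: order_inj; rewrite // e.
rewrite -card_ys length_size -(size_map qproj).
apply: leq_trans (card_fixed_le_twisted_classes qphiM _ _) (card_twisted_classes_le _).
- move=> y; rewrite inE => /mapP [e _ ->].
  by rewrite -qproj_gpow qphi_proj hom_gpow // fixb.
- move=> y z; rewrite !inE => /mapP [e1 e1es ->] /mapP [e2 e2es ->] /imsetP [g _ conj].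
  by congr (_ ^+ _)%g; apply: order_inj; rewrite // conj orderJ.
exact: qproj_twisted_cover.
Qed.
End FiniteQuotient.

Lemma invariant_inter (phi : G -> G) (M N : G -> Prop) :
  invariant_subgroup phi M -> invariant_subgroup phi N ->
  invariant_subgroup phi (fun x => M x /\ N x).
Proof.
move=> [Mn [Mfi Minv]] [Nn [Nfi Ninv]].
split; first exact: normal_inter.
split; first exact: finite_index_inter.
by move=> x [Mx Nx]; split; [apply: Minv | apply: Ninv].
Qed.

Section DivisorChain.
Variable phi : G -> G.
Hypothesis phi_aut : is_automorphism phi.
Hypotheses (G_fg : finitely_generated G) (G_rf : residually_finite G) (G_tf : torsion_free G).
Variable b : G.
Hypothesis b_neq1 : b <> one.

Lemma invariant_avoiding_power n :
  0 < n -> exists2 N, invariant_subgroup phi N & ~ N (gpow b n).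
Proof.
move=> n_gt0; have bn_neq1 : gpow b n <> one.
  by move=> bn1; apply: b_neq1; exact: (G_tf (elimT ltP n_gt0) bn1).
have [N0 [N0n [N0fi notN0]]] := G_rf bn_neq1.
have [N Ninv NN0] := invariant_subgroup_below phi_aut G_fg N0n N0fi.
by exists N => // /NN0.
Qed.

(* Invariant subgroups modulo which the order of b has k + 1 distinct divisors: if m is
   the order of b modulo M and N avoids b^m, the order modulo M and N is a proper
   multiple of m. *)
Lemma divisor_chain k : exists2 M, invariant_subgroup phi M & exists es : seq nat,
  [/\ size es = k.+1, uniq es & forall e, e \in es -> forall n, M (gpow b n) -> e %| n].
Proof.
elim: k => [|k [M Minv [es [size_es uniq_es div_es]]]].
  exists (fun _ => True); first by split; [|split; [exact: finite_index_full|]].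
  by exists [:: 1]; split=> // e; rewrite inE => /eqP -> n _; apply: dvd1n.
have [Mn [Mfi _]] := Minv.
have [m m_gt0 order_m] := order_mod b Mn Mfi.
have [N Ninv notNbm] := invariant_avoiding_power m_gt0.
have M'inv := invariant_inter Minv Ninv; have [M'n [M'fi _]] := M'inv.
have [m' m'_gt0 order_m'] := order_mod b M'n M'fi.
exists (fun x => M x /\ N x) => //; exists (m' :: es); split=> /=; first by rewrite size_es.
  rewrite uniq_es andbT; apply/negP => m'es.
  have m'_dvd_m : m' %| m by apply: (div_es _ m'es); apply/order_m.
  have m_dvd_m' : m %| m' by apply/order_m; case: (proj2 (order_m' m') (dvdnn m')).
  have m_eq : m = m' by apply/eqP; rewrite eqn_dvd m_dvd_m' m'_dvd_m.
  by apply: notNbm; case: (proj2 (order_m' m)); rewrite m_eq.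
move=> e; rewrite inE => /orP [/eqP -> | ees] n bn; first exact/order_m'.
by apply: (div_es e ees); case: bn.
Qed.
End DivisorChain.

Lemma fixed_points_trivial (phi : G -> G) : is_automorphism phi ->
  finitely_generated G -> residually_finite G -> torsion_free G ->
  reidemeister_finite phi -> forall b, phi b = b -> b = one.
Proof.
move=> phi_aut G_fg G_rf G_tf [reps cover_tw] b fixb; apply: NNPP => b_neq1.
have [M [Mn [[L L_cover] Minv]] [es [size_es uniq_es div_es]]] :=
  divisor_chain phi_aut G_fg G_rf G_tf b_neq1 (List.length reps).
have := divisor_chain_le_reidemeister Mn L_cover (proj1 phi_aut) Minv fixb cover_tw
  uniq_es div_es.
by rewrite size_es ltnn.
Qed.

Definition inner_twist (g : G) (phi : G -> G) (x : G) : G := g ** phi x ** g^-1.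

Lemma inner_twist_aut g phi : is_automorphism phi -> is_automorphism (inner_twist g phi).
Proof.
move=> [phiM [phi_inj phiS]].
split; first by move=> x y; rewrite /inner_twist phiM !gmulA gmulKVr.
split=> [x y /gmulIr /gmulIl /phi_inj // | y].
have [x def_x] := phiS (g^-1 ** y ** g); exists x.
by rewrite /inner_twist def_x !gmulA gmul_Vr gmul_1l gmulKr.
Qed.

Lemma stab_inner_twist_fixed g phi b : stab_phi phi g b -> inner_twist g phi b = b.
Proof. by rewrite /stab_phi /inner_twist => {1}->; rewrite gmulKVr gmulKr. Qed.

(* Right translation by g carries phi-twisted classes to twisted classes of the twist. *)
Lemma reidemeister_inner_twist g phi :
  reidemeister_finite phi -> reidemeister_finite (inner_twist g phi).
Proof.
move=> [reps cover_tw]; exists (List.map (fun r => r ** g^-1) reps) => x.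
have [r [rreps [h def_xg]]] := cover_tw (x ** g).
exists (r ** g^-1); split; first exact: List.in_map.
by exists h; rewrite /inner_twist !ginvM ginvK !gmulA gmulKVr -def_xg gmulKr.
Qed.
End AbstractGroup.

Theorem mainTheorem11 (G : Group) (phi : G -> G) :
  torsion_free G -> finitely_generated G -> residually_finite G ->
  is_automorphism phi -> reidemeister_finite phi ->
  forall g b : G, stab_phi phi g b -> b = gone.
Proof.
move=> G_tf G_fg G_rf phi_aut R_fin g b stab_b.
apply: (fixed_points_trivial (inner_twist_aut g phi_aut)) => //.
- exact: reidemeister_inner_twist R_fin.
- exact: stab_inner_twist_fixed stab_b.
Qed.
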